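(* Let $n\ge1$, $t\in\mathbb{C}^{N_n}\setminus\{0\}$, and write $f_t=\sum_{k=0}^{n-1}x_k^{s_k}+\sum_jT_j(x_n)x_0^{j_0}\cdots x_{n-1}^{j_{n-1}}$ as in the context. For every $c\in\mathbb{C}$, with $\ell=x_n-c$, one has $\min_{j:\,T_j\not\equiv0}\overline{\mathrm{val}}_\ell(T_j)\le1$; and equality holds (for some $c$) if and only if the point $[t]\in\mathcal{E}_n$ lies in the boundary $\partial\mathcal{E}_n$.
   Context: Sylvester numbers: $s_0=2$, $s_{k+1}=1+\prod_{i=0}^ks_i$. For $m\ge0$: $d_m=\prod_{k=0}^ms_k$, $d_{m,k}=d_m/s_k$, $w^{(m)}(i)=d_m-\sum_{k=0}^mi_kd_{m,k}$; $I_m$ = tuples $(i_0,\dots,i_m)$ with $0\le i_k\le s_k-2$ and $w^{(m)}(i)>0$, $N_m=|I_m|$. For $t\in\mathbb{C}^{N_m}$: $F_t=\sum_{k=0}^mx_k^{s_k}+\sum_{i\in I_m}t_ix^ix_{m+1}^{w^{(m)}(i)}$ in the weighted polynomial ring with weights $d_{m,0},\dots,d_{m,m},1$, and $f_t=F_t|_{x_{m+1}=1}$. $\mathcal{E}_m=[(\mathbb{C}^{N_m}\setminus0)/\mathbb{C}^*]$ with $\lambda\cdot t=(\lambda^{w^{(m)}(i)}t_i)$. Boundary: for $t'\in\mathbb{C}^{N_{n-1}}\setminus0$ put $\ell'=x_n-\frac1{s_n}t'_{(0,\dots,0)}x_{n+1}^{d_{n-1}}$; then $\sum_{k<n}x_k^{s_k}+\sum_{j\in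 I_{n-1}}t'_jx_0^{j_0}\cdots x_{n-1}^{j_{n-1}}\ell'^{\,w^{(n-1)}(j)}x_{n+1}^{w^{(n-1)}(j)}+\ell'^{\,s_n}=F_t$ for a unique $t\in\mathbb{C}^{N_n}$, and $\partial\mathcal{E}_n$ is the image of the induced map $\mathcal{E}_{n-1}\to\mathcal{E}_n$. Decomposition: collecting powers of $x_n$, $f_t=\sum_{k<n}x_k^{s_k}+\sum_jT_j(x_n)x_0^{j_0}\cdots x_{n-1}^{j_{n-1}}$ with $j=(j_0,\dots,j_{n-1})$, $0\le j_k\le s_k-2$, $T_j\in\mathbb{C}[x_n]$. For $\ell=x_n-c$: $\mathrm{val}_\ell(T_j)$ = largest power of $\ell$ dividing $T_j$, and $\overline{\mathrm{val}}_\ell(T_j)=\mathrm{val}_\ell(T_j)/w^{(n-1)}(j)$. *)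

From HB Require Import structures.
From mathcomp Require Import all_boot all_order all_algebra.
From mathcomp Require Import Rstruct.
From mathcomp Require Import complex.
From mathcomp Require Import mpoly.
Set Implicit Arguments. Unset Strict Implicit. Unset Printing Implicit Defensive.
Import Order.TTheory GRing.Theory Num.Theory.
Local Open Scope ring_scope.

Definition CC : fieldType := complex.complex Rdefinitions.R.

(** Sylvester numbers.  prodS k = s_0 * ... * s_(k-1) and s_k = 1 + prodS k
    (for k = 0 this gives s_0 = 1 + 1 = 2). *)
Fixpoint prodS (k : nat) : nat :=
  match k with 0 => 1 | k'.+1 => (prodS k' * (1 + prodS k'))%N end.
Definition sylv (k : nat) : nat := (1 + prodS k)%N.

Lemma sylv0 : sylv 0 = 2%N. Proof. by []. Qed.
Lemma prodS_big k : prodS k = (\prod_(i < k) sylv i)%N.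
Proof. by elim: k => [|k IH]; rewrite ?big_ord0 // big_ord_recr /= -IH. Qed.
Lemma sylvS k : sylv k.+1 = (1 + \prod_(i < k.+1) sylv i)%N.
Proof. by rewrite /sylv prodS_big. Qed.

Lemma sylv_pred_gt0 k : (0 < (sylv k).-1)%N.
Proof. by rewrite /sylv /=; elim: k => //= k IH; rewrite muln_gt0 IH. Qed.

Definition Tup (L : nat) := {dffun forall k : 'I_L, 'I_(sylv k).-1}.

Definition ztup (L : nat) : Tup L := [ffun k : 'I_L => Ordinal (sylv_pred_gt0 k)].

(** For a tuple with L = m+1 components:  d_m = prod_(k<=m) s_k  (= dprod L),
    d_(m,k) = d_m / s_k,  w^(m)(i) = d_m - sum_k i_k d_(m,k)  (an integer). *)
Definition dprod (L : nat) : nat := (\prod_(k < L) sylv k)%N.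
Definition weight (L : nat) (i : Tup L) : int :=
  (dprod L)%:Z - (\sum_(k < L) (i k : nat) * (dprod L %/ sylv k))%N%:Z.

Definition Idx (L : nat) := {i : Tup L | (0 < weight i)%R}.

Lemma weight_ztup_pos L : (0 < weight (ztup L))%R.
Proof.
rewrite /weight big1 ?subr0 ?ltz_nat.
  by rewrite /dprod prodn_gt0 // => k; rewrite /sylv.
by move=> k _; rewrite /ztup ffunE.
Qed.

Definition zidx (L : nat) : Idx L := exist _ (ztup L) (weight_ztup_pos L).

Definition act (L : nat) (lam : CC) (t : Idx L -> CC) : Idx L -> CC :=
  fun i => lam ^+ `|weight (val i)|%N * t i.

Definition nonzero (L : nat) (t : Idx L -> CC) : Prop := exists i, t i != 0.

(** The weighted-homogeneous polynomial F_t for t in C^{N_n}, in the n+2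
    variables x_0,...,x_(n+1) ('X_k, k : 'I_n.+2);  here L = n+1. *)
Definition Xv (n : nat) (k : nat) : {mpoly CC[n.+2]} := 'X_(inord k).

Definition Fpoly (n : nat) (t : Idx n.+1 -> CC) : {mpoly CC[n.+2]} :=
  \sum_(k < n.+1) Xv n k ^+ sylv k
  + \sum_(i : Idx n.+1)
      t i *: ((\prod_(k < n.+1) Xv n k ^+ (val i k : nat))
              * Xv n n.+1 ^+ `|weight (val i)|%N).

Definition ellB (n : nat) (t' : Idx n -> CC) : {mpoly CC[n.+2]} :=
  Xv n n - ((sylv n)%:R^-1 * t' (zidx n)) *: Xv n n.+1 ^+ dprod n.

Definition Gpoly (n : nat) (t' : Idx n -> CC) : {mpoly CC[n.+2]} :=
  \sum_(k < n) Xv n k ^+ sylv k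
  + \sum_(j : Idx n)
      t' j *: ((\prod_(k < n) Xv n k ^+ (val j k : nat))
               * ellB t' ^+ `|weight (val j)|%N
               * Xv n n.+1 ^+ `|weight (val j)|%N)
  + ellB t' ^+ sylv n.

(** [t] lies in the boundary of E_n: it is the image of some [t'] in E_(n-1),
    i.e. G_t' = F_(t'') with [t''] = [t], i.e. t'' = lambda . t, lambda <> 0. *)
Definition in_boundary (n : nat) (t : Idx n.+1 -> CC) : Prop :=
  exists (t' : Idx n -> CC) (lam : CC),
    nonzero t' /\ lam != 0 /\ Gpoly t' = Fpoly (act lam t).

(** Decomposition f_t = sum_(k<n) x_k^(s_k) + sum_j T_j(x_n) x_0^(j_0)...x_(n-1)^(j_(n-1)):
    for i in I_n write i = (j, i_n) with j the first n components. *)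
Definition restr (n : nat) (i : Tup n.+1) : Tup n :=
  [ffun k : 'I_n => (i (widen_ord (leqnSn n) k) : 'I_(sylv k).-1)].

Definition Tj (n : nat) (t : Idx n.+1 -> CC) (j : Tup n) : {poly CC} :=
  (if j == ztup n then 'X ^+ sylv n else 0)
  + \sum_(i : Idx n.+1 | restr (val i) == j) t i *: 'X ^+ (val i ord_max : nat).

(** val_ell(T_j) for ell = x_n - c (multiplicity of c as a root), and the
    normalized valuation  valbar = val / w^(n-1)(j). *)
Definition valbar (n : nat) (t : Idx n.+1 -> CC) (c : CC) (j : Tup n) : rat :=
  (mup c (Tj t j))%:R / (weight j)%:~R.

(** min over j with T_j <> 0 of valbar.  The fold starts from the value at
    j = (0,...,0), which belongs to the range since T_(0,...,0) has leading term
    x_n^(s_n) and is therefore nonzero. *)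
Definition minvalbar (n : nat) (t : Idx n.+1 -> CC) (c : CC) : rat :=
  \big[Order.min/valbar t c (ztup n)]_(j : Tup n | Tj t j != 0) valbar t c j.

(* For j <> 0, T_j has degree at most w(j) because w(j) < d_(n-1) = s_n - 1,
   while T_0 is monic of degree s_n = d_(n-1) + 1 without x_n^(d_(n-1)) term.
   Hence val_l(T_j) <= w(j) for T_j <> 0, except when T_0 = (x_n - c)^(s_n);
   the missing term then forces c = 0, i.e. T_0 = x_n^(s_n), and as t <> 0
   another T_j witnesses the bound.  If val_l(T_j) >= w(j) for all j, these
   degree constraints force T_j = a_j l^(w(j)) for j <> 0 and
   T_0 = s_n c l^(d_(n-1)) + l^(s_n): exactly the coefficient polynomials of
   the boundary polynomial with t'_j = a_j and t'_0 = s_n c.  Conversely,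
   comparing coefficients in G_t' = F_(lam . t) identifies the T_j of lam . t
   with those of G_t', and the substitution x_n -> lam^(d_(n-1)) x_n carries
   the divisibility by l^(w(j)) back to t. *)

From HB Require Import structures.
From mathcomp Require Import all_boot all_order all_algebra.
From mathcomp Require Import Rstruct complex mpoly.
From mathcomp Require Import zify ring.
Import Order.TTheory GRing.Theory Num.Theory.
Local Open Scope ring_scope.
Set Implicit Arguments. Unset Strict Implicit. Unset Printing Implicit Defensive.

Lemma sylv_gt0 k : (0 < sylv k)%N.
Proof. by []. Qed.

Lemma dprod_gt0 n : (0 < dprod n)%N.
Proof. by rewrite prodn_gt0. Qed.

Lemma sylv_dprod n : sylv n = (dprod n).+1.
Proof. by rewrite /sylv prodS_big. Qed.

Lemma dvdn_sylv_dprod n (k : 'I_n) : (sylv k %| dprod n)%N.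
Proof. by rewrite /dprod (bigD1 k) //= dvdn_mulr. Qed.

Lemma weight_ztup n : weight (ztup n) = (dprod n)%:Z.
Proof. by rewrite /weight big1 ?subr0 // => k _; rewrite ffunE. Qed.

Lemma absz_weight_ztup n : `|weight (ztup n)|%N = dprod n.
Proof. by rewrite weight_ztup absz_nat. Qed.

Lemma weight_le_dprod n (j : Tup n) : weight j <= (dprod n)%:Z.
Proof. by rewrite /weight lerBlDr lerDl. Qed.

Lemma weight_lt_dprod n (j : Tup n) : j != ztup n -> weight j < (dprod n)%:Z.
Proof.
move=> /eqP j_neq0; rewrite /weight ltrBlDr ltrDl ltz_nat.
have [k jk_gt0] : exists k, (0 < j k)%N.
  apply/existsP; apply: contra_notT j_neq0; rewrite negb_exists => /forallP j0.
  by apply/ffunP => k; apply/val_inj; rewrite ffunE /=; apply/eqP; rewrite -leqn0 leqNgt j0.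
rewrite (bigD1 k) //= ltn_addr // muln_gt0 jk_gt0 divn_gt0 ?sylv_gt0 //.
exact: dvdn_leq (dprod_gt0 n) (dvdn_sylv_dprod k).
Qed.

Lemma restrE n (i : Tup n.+1) (k : 'I_n) :
  (restr i k : nat) = (i (widen_ord (leqnSn n) k) : nat).
Proof. by rewrite ffunE. Qed.

Lemma weight_restr n (i : Tup n.+1) :
  weight i = (sylv n)%:Z * weight (restr i) - ((i ord_max : nat) * dprod n)%N%:Z.
Proof.
rewrite /weight; have -> : dprod n.+1 = (dprod n * sylv n)%N by rewrite /dprod big_ord_recr.
rewrite big_ord_recr /= mulnK //.
have -> : (\sum_(k < n) (i (widen_ord (leqnSn n) k) : nat)
             * (dprod n * sylv n %/ sylv (widen_ord (leqnSn n) k)))%N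
          = (sylv n * \sum_(k < n) (restr i k : nat) * (dprod n %/ sylv k))%N.
  rewrite big_distrr; apply: eq_bigr => k _.
  by rewrite restrE /= -divn_mulAC ?dvdn_sylv_dprod // mulnA mulnC.
rewrite /sylv !PoszD !PoszM; ring.
Qed.

Lemma last_lt_dprod n (i : Tup n.+1) : ((i ord_max : nat) < dprod n)%N.
Proof. by move: (i ord_max : nat) (ltn_ord (i ord_max)); rewrite sylv_dprod. Qed.

Definition idx_last n (i : Idx n.+1) : nat := val i ord_max.

Lemma idx_weight_restr n (i : Idx n.+1) :
  0 < weight (restr (val i)) /\
  (`|weight (val i)| + idx_last i * dprod n = sylv n * `|weight (restr (val i))|)%N.
Proof.
have := weight_restr (val i); have := valP i; rewrite -/(idx_last i).
set wi := weight (val i); set wj := weight _ => wi_gt0 wiE.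
have wj_gt0 : 0 < wj by nia.
split=> //; move: wiE.
rewrite -[wi](gez0_abs (ltW wi_gt0)) -[wj](gez0_abs (ltW wj_gt0)).
move: `|wi|%N `|wj|%N => a b; lia.
Qed.

(* Since w(j) < d_(n-1) = s_n - 1 for j <> 0, the inequality
   i_n d_(n-1) < s_n w(j) forces i_n <= w(j). *)
Lemma idx_last_le_weight n (i : Idx n.+1) : restr (val i) != ztup n ->
  (idx_last i <= `|weight (restr (val i))|)%N.
Proof.
move=> /weight_lt_dprod; have [wj_gt0 wiE] := idx_weight_restr i.
rewrite -(gez0_abs (ltW wj_gt0)) ltz_nat sylv_dprod in wiE *.
have := dprod_gt0 n; nia.
Qed.

Lemma absz_weight_gt0 n (j : Idx n) : (0 < `|weight (val j)|)%N.
Proof. by rewrite absz_gt0 lt0r_neq0 // (valP j). Qed.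

Definition idx_restr n (i : Idx n.+1) : Idx n :=
  exist (fun j : Tup n => 0 < weight j) (restr (val i)) (idx_weight_restr i).1.

Lemma idx_eq n (i1 i2 : Idx n.+1) :
  restr (val i1) = restr (val i2) -> idx_last i1 = idx_last i2 -> i1 = i2.
Proof.
move=> eq_restr eq_last; apply/val_inj/ffunP => k; apply: val_inj.
have [k_lt_n|n_le_k] := ltnP k n; last first.
  by have -> : k = ord_max by apply: val_inj => /=; have := ltn_ord k; lia.
have -> : k = widen_ord (leqnSn n) (Ordinal k_lt_n) by apply: val_inj.
by have := congr1 (fun j : Tup n => (j (Ordinal k_lt_n) : nat)) eq_restr; rewrite !restrE.
Qed.

Section XsubCPowers.
Variable F : fieldType.
Implicit Types (c : F) (p : {poly F}).

Lemma mup_lt_size c p : p != 0 -> (mup c p < size p)%N.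
Proof.
move=> p_neq0; rewrite mup_ltn //; apply/negP => /(dvdp_leq p_neq0).
by rewrite size_exp_XsubC ltnn.
Qed.

Lemma dvdp_XsubC_exp_size c p m : p != 0 -> ('X - c%:P) ^+ m %| p ->
  (size p <= m.+1)%N -> p = lead_coef p *: ('X - c%:P) ^+ m.
Proof.
move=> p_neq0 /dvdpP [q pE]; subst p; have mon := monic_exp m (monicXsubC c).
have q_neq0 : q != 0 by move: p_neq0; rewrite mulf_eq0 negb_or => /andP [].
rewrite size_Mmonic // size_exp_XsubC addnS /= => size_le.
have /size1_polyC -> : (size q <= 1)%N by rewrite -(leq_add2r m) add1n.
by rewrite lead_coefM lead_coefC (monicP mon) mulr1 mul_polyC.
Qed.

Lemma coef_XsubC_exp c m : (('X - c%:P) ^+ m)`_m = 1.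
Proof.
by have /monicP := monic_exp m (monicXsubC c); rewrite lead_coefE size_exp_XsubC.
Qed.

Lemma coef_XsubC_expS c m : (('X - c%:P) ^+ m.+1)`_m = - (m.+1%:R * c).
Proof.
elim: m => [|m IHm]; first by rewrite expr1 coefB coefX coefC sub0r mul1r.
rewrite exprSr mulrBr coefB coefMX /= IHm coefMC coef_XsubC_exp -[m.+2]addn1 natrD.
ring.
Qed.

Lemma monic_dvdp_XsubC_expS c p m : p \is monic -> size p = m.+2 -> p`_m = 0 ->
  m.+1%:R != 0 :> F -> ('X - c%:P) ^+ m.+1 %| p -> p = 'X ^+ m.+1.
Proof.
move=> p_monic p_size pm0 m1_neq0 dvd_p.
have pE := dvdp_XsubC_exp_size (monic_neq0 p_monic) dvd_p (eq_leq p_size).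
rewrite (monicP p_monic) scale1r in pE.
have c0 : c = 0.
  apply/eqP; move: pm0; rewrite pE coef_XsubC_expS => /eqP.
  by rewrite oppr_eq0 mulf_eq0 (negPf m1_neq0).
by rewrite pE c0 subr0.
Qed.

Lemma monic_dvdp_XsubC_exp c p m : p \is monic -> size p = m.+2 -> p`_m = 0 ->
  ('X - c%:P) ^+ m %| p ->
  p = (m.+1%:R * c) *: ('X - c%:P) ^+ m + ('X - c%:P) ^+ m.+1.
Proof.
move=> p_monic p_size pm0 dvd_p; apply/eqP; rewrite -subr_eq0; apply/eqP.
set r := p - _.
have dvd_r : ('X - c%:P) ^+ m %| r.
  by rewrite dvdp_sub // dvdp_add ?dvdp_exp2l // -mul_polyC dvdp_mull.
have r_size : (size r <= m.+1)%N.
  apply/leq_sizeP => k; rewrite leq_eqVlt => /orP [/eqP <-|k_gt].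
    have p_top : p`_m.+1 = 1 by rewrite -[m.+1]/(m.+2.-1) -p_size; exact/monicP.
    by rewrite coefB coefD coefZ p_top coef_XsubC_exp nth_default
      ?size_exp_XsubC // mulr0 add0r subrr.
  rewrite nth_default // (leq_trans (size_polyD _ _)) // size_polyN geq_max p_size k_gt.
  rewrite (leq_trans (size_polyD _ _)) // geq_max size_exp_XsubC k_gt andbT.
  by rewrite (leq_trans (size_scale_leq _ _)) // size_exp_XsubC ltnW.
have [//|r_neq0] := eqVneq r 0.
have rE := dvdp_XsubC_exp_size r_neq0 dvd_r r_size.
have : r`_m = 0.
  by rewrite /r coefB pm0 coefD coefZ coef_XsubC_exp coef_XsubC_expS mulr1; ring.
by rewrite rE coefZ coef_XsubC_exp mulr1 => /eqP; rewrite lead_coef_eq0 (negPf r_neq0).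
Qed.

End XsubCPowers.

Section CoefficientPolynomials.
Variables (n : nat) (t : Idx n.+1 -> CC).

Definition Ttail (j : Tup n) : {poly CC} :=
  \sum_(i : Idx n.+1 | restr (val i) == j) t i *: 'X ^+ idx_last i.

Lemma TjE j : Tj t j = (if j == ztup n then 'X ^+ sylv n else 0) + Ttail j.
Proof. by []. Qed.

Lemma Tj_tail j : j != ztup n -> Tj t j = Ttail j.
Proof. by move=> /negPf j_neq0; rewrite TjE j_neq0 add0r. Qed.

Lemma coef_Ttail_last (i : Idx n.+1) : (Ttail (restr (val i)))`_(idx_last i) = t i.
Proof.
rewrite coef_sum (bigD1 i) //= coefZ coefXn eqxx mulr1 big1 ?addr0 //.
move=> i' /andP [/eqP eq_restr i'_neq]; rewrite coefZ coefXn.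
case: eqP => [/esym/(idx_eq eq_restr) i'_eq|]; last by rewrite mulr0.
by rewrite i'_eq eqxx in i'_neq.
Qed.

Lemma size_Ttail_le j B :
  (forall i : Idx n.+1, restr (val i) = j -> (idx_last i < B)%N) ->
  (size (Ttail j) <= B)%N.
Proof.
move=> last_lt; apply: (big_ind (fun p : {poly CC} => (size p <= B)%N)).
- by rewrite size_poly0.
- by move=> p q p_le q_le; rewrite (leq_trans (size_polyD _ _)) // geq_max p_le q_le.
- move=> i /eqP /last_lt last_lt_B.
  by rewrite (leq_trans (size_scale_leq _ _)) // size_polyXn.
Qed.

Lemma size_Ttail_dprod j : (size (Ttail j) <= dprod n)%N.
Proof. by apply: size_Ttail_le => i _; exact: last_lt_dprod. Qed.

Lemma size_Tj_weight j : j != ztup n -> (size (Tj t j) <= `|weight j|.+1)%N.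
Proof.
move=> j_neq0; rewrite Tj_tail //; apply: size_Ttail_le => i restr_i.
by rewrite ltnS -restr_i idx_last_le_weight // restr_i.
Qed.

Lemma size_Tj_le j : (size (Tj t j) <= (sylv n).+1)%N.
Proof.
rewrite TjE (leq_trans (size_polyD _ _)) // geq_max.
rewrite (leq_trans (size_Ttail_dprod j)) ?andbT; last by rewrite sylv_dprod leqW.
by case: eqP; rewrite ?size_polyXn ?size_poly0.
Qed.

Lemma weight_gt0_Ttail j : Ttail j != 0 -> 0 < weight j.
Proof.
have [i /eqP <- _|no_i] := pickP (fun i : Idx n.+1 => restr (val i) == j).
  exact: (idx_weight_restr i).1.
by rewrite /Ttail big_pred0 // eqxx.
Qed.

Lemma weight_gt0_Tj j : Tj t j != 0 -> 0 < weight j.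
Proof.
have [->|j_neq0] := eqVneq j (ztup n); first by rewrite weight_ztup ltz_nat dprod_gt0.
by rewrite Tj_tail //; exact: weight_gt0_Ttail.
Qed.

Lemma coef_Tj_last (i : Idx n.+1) : (Tj t (restr (val i)))`_(idx_last i) = t i.
Proof.
rewrite TjE coefD coef_Ttail_last; case: eqP => _; last by rewrite coef0 add0r.
by rewrite coefXn sylv_dprod ltn_eqF /= ?add0r // ltnS ltnW // last_lt_dprod.
Qed.

Lemma size_Tj0 : size (Tj t (ztup n)) = (sylv n).+1.
Proof.
rewrite TjE eqxx size_polyDl size_polyXn // ltnS sylv_dprod.
by rewrite (leq_trans (size_Ttail_dprod _)).
Qed.

Lemma Tj0_monic : Tj t (ztup n) \is monic.
Proof.
apply/monicP; rewrite lead_coefE size_Tj0 /= TjE eqxx coefD coefXn eqxx.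
by rewrite nth_default ?addr0 // sylv_dprod (leq_trans (size_Ttail_dprod _)).
Qed.

Lemma coef_Tj0_dprod : (Tj t (ztup n))`_(dprod n) = 0.
Proof.
rewrite TjE eqxx coefD coefXn sylv_dprod ltn_eqF //= add0r.
by rewrite nth_default ?size_Ttail_dprod.
Qed.

End CoefficientPolynomials.

Lemma Tj_neq0 n (t : Idx n.+1 -> CC) j : Ttail t j != 0 -> Tj t j != 0.
Proof.
move=> tail_neq0; have [->|j_neq0] := eqVneq j (ztup n); last by rewrite Tj_tail.
by rewrite monic_neq0 ?Tj0_monic.
Qed.

Lemma Ttail_last_neq0 n (t : Idx n.+1 -> CC) (i : Idx n.+1) :
  t i != 0 -> Ttail t (restr (val i)) != 0.
Proof. by apply: contra_neq => tail0; rewrite -coef_Ttail_last tail0 coef0. Qed.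

Section NormalizedValuation.
Variables (n : nat) (t : Idx n.+1 -> CC) (c : CC).

Lemma valbarE j : 0 < weight j ->
  valbar t c j = (mup c (Tj t j))%:R / (`|weight j|%N)%:R.
Proof. by move=> /ltW/gez0_abs wE; rewrite /valbar -[in LHS]wE. Qed.

Lemma valbar_le1 j : 0 < weight j ->
  (valbar t c j <= 1) = (mup c (Tj t j) <= `|weight j|)%N.
Proof.
by move=> w_gt0; rewrite valbarE // ler_pdivrMr ?mul1r ?ler_nat // ltr0n absz_gt0 lt0r_neq0.
Qed.

Lemma valbar_ge1 j : 0 < weight j ->
  (1 <= valbar t c j) = (`|weight j| <= mup c (Tj t j))%N.
Proof.
by move=> w_gt0; rewrite valbarE // ler_pdivlMr ?mul1r ?ler_nat // ltr0n absz_gt0 lt0r_neq0.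
Qed.

Lemma minvalbar_le j : Tj t j != 0 -> minvalbar t c <= valbar t c j.
Proof. by move=> Tj_neq0; rewrite /minvalbar (bigD1 j) //= ge_min lexx. Qed.

Lemma le_minvalbar x :
  (forall j, Tj t j != 0 -> x <= valbar t c j) -> x <= minvalbar t c.
Proof.
move=> x_le; apply: (big_ind (fun y => x <= y)) => //; last first.
  by move=> a b x_le_a x_le_b; rewrite le_min x_le_a x_le_b.
by apply: x_le; rewrite monic_neq0 ?Tj0_monic.
Qed.

Lemma mup_Tj_le_weight j : Ttail t j != 0 -> (mup c (Tj t j) <= `|weight j|)%N.
Proof.
move=> tail_neq0; have [j0|j_neq0] := eqVneq j (ztup n); last first.
  rewrite -ltnS (leq_trans (mup_lt_size c (Tj_neq0 tail_neq0))) //.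
  exact: size_Tj_weight.
rewrite j0 absz_weight_ztup in tail_neq0 *.
rewrite mup_leq ?(monic_neq0 (Tj0_monic t)) //; move: tail_neq0; apply: contra => dvd_T0.
have s_neq0 : (dprod n).+1%:R != 0 :> CC by rewrite pnatr_eq0.
have size_T0 : size (Tj t (ztup n)) = (dprod n).+2 by rewrite size_Tj0 sylv_dprod.
have := monic_dvdp_XsubC_expS (Tj0_monic t) size_T0 (coef_Tj0_dprod t) s_neq0 dvd_T0.
rewrite -sylv_dprod => T0E; apply/eqP/(addrI ('X ^+ sylv n)).
by rewrite addr0 -[RHS]T0E TjE eqxx.
Qed.

Lemma minvalbar_le1 : nonzero t -> minvalbar t c <= 1.
Proof.
case=> i /Ttail_last_neq0 tail_neq0.
apply: le_trans (minvalbar_le (Tj_neq0 tail_neq0)) _.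
by rewrite valbar_le1 ?mup_Tj_le_weight // (weight_gt0_Ttail tail_neq0).
Qed.

End NormalizedValuation.

Section WeightedHomogenization.
Variables (R : comNzRingType) (k : nat) (a b : 'I_k) (d : nat).

(* x_a gets weight d and x_b weight 1; the truncated subtraction is harmless
   as long as d * deg p <= N. *)
Definition whomog (N : nat) (p : {poly R}) : {mpoly R[k]} :=
  \sum_(i < N.+1) p`_i *: ('X_a ^+ i * 'X_b ^+ (N - i * d)).

Fact whomog_is_linear N : linear (whomog N).
Proof.
move=> c p q; rewrite /whomog scaler_sumr -big_split; apply: eq_bigr => i _.
by rewrite coefD coefZ scalerDl scalerA.
Qed.

HB.instance Definition _ N :=
  GRing.isLinear.Build R {poly R} {mpoly R[k]} _ (whomog N) (whomog_is_linear N).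

Lemma whomogXn N i : (i <= N)%N ->
  whomog N 'X^i = 'X_a ^+ i * 'X_b ^+ (N - i * d).
Proof.
move=> i_le_N; rewrite /whomog (bigD1 (Ordinal (i_le_N : (i < N.+1)%N))) //=.
rewrite coefXn eqxx scale1r big1 ?addr0 // => j j_neq.
rewrite coefXn; case: eqP => [j_eq|_]; last by rewrite scale0r.
by case/eqP: j_neq; apply: val_inj.
Qed.

Lemma whomog_XsubC_exp (c : R) m e : (0 < d)%N ->
  whomog (d * m + e) (('X - c%:P) ^+ m) = ('X_a - c *: 'X_b ^+ d) ^+ m * 'X_b ^+ e.
Proof.
move=> d_gt0; rewrite -scaleNr -polyCN !exprDn linear_sum mulr_suml.
apply: eq_bigr => i _; have i_le_m := ltnSE (ltn_ord i).
rewrite -polyC_exp [_ * _%:P]mulrC mul_polyC scalerMnl linearZ /=.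
rewrite exprZn -scalerAr mulrnAl -scalerAl scalerMnl; congr (_ *: _).
rewrite whomogXn; last by nia.
by rewrite -exprM -mulrA -exprD; congr (_ * _ ^+ _); nia.
Qed.

End WeightedHomogenization.

Local Notation hz n := (@whomog CC n.+2 (inord n) (inord n.+1) (dprod n)).

Definition xmon n (j : Tup n) : {mpoly CC[n.+2]} := \prod_(k < n) Xv n k ^+ (j k : nat).

Lemma xmon_restr n (i : Tup n.+1) :
  \prod_(k < n.+1) Xv n k ^+ (i k : nat) = xmon (restr i) * Xv n n ^+ (i ord_max : nat).
Proof. by rewrite big_ord_recr; congr (_ * _); apply: eq_bigr => k _; rewrite restrE. Qed.

Lemma xmon_ztup n : xmon (ztup n) = 1.
Proof. by rewrite /xmon big1 // => k _; rewrite ffunE expr0. Qed.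

Lemma sylv_le_homog_degree n (J : Idx n) : (sylv n <= sylv n * `|weight (val J)|)%N.
Proof. by rewrite leq_pmulr ?absz_weight_gt0. Qed.

Lemma homog_Ttail n (u : Idx n.+1 -> CC) (J : Idx n) :
  \sum_(i : Idx n.+1 | restr (val i) == val J)
     u i *: (Xv n n ^+ idx_last i * Xv n n.+1 ^+ `|weight (val i)|)
  = hz n (sylv n * `|weight (val J)|) (Ttail u (val J)).
Proof.
rewrite linear_sum; apply: eq_bigr => i /eqP <-; rewrite linearZ /=.
have [_ wiE] := idx_weight_restr i.
rewrite whomogXn -wiE ?addnK //; have := dprod_gt0 n; nia.
Qed.

Lemma sum_xmon_homog_ztup n (N : Idx n -> nat) (p : {poly CC}) :
  \sum_(J : Idx n) xmon (val J) * hz n (N J) (if val J == ztup n then p else 0)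
  = hz n (N (zidx n)) p.
Proof.
rewrite (bigD1 (zidx n)) //= eqxx xmon_ztup mul1r big1 ?addr0 // => J J_neq0.
rewrite ifF ?linear0 ?mulr0 //.
by move: J_neq0; apply: contraNF => /eqP J0; apply/eqP/val_inj.
Qed.

Lemma FpolyE n (u : Idx n.+1 -> CC) :
  Fpoly u = \sum_(k < n) Xv n k ^+ sylv k
    + \sum_(J : Idx n) xmon (val J) * hz n (sylv n * `|weight (val J)|) (Tj u (val J)).
Proof.
rewrite /Fpoly big_ord_recr /= -addrA; congr (_ + _).
under [in RHS]eq_bigr => J _ do rewrite TjE linearD mulrDr.
rewrite big_split sum_xmon_homog_ztup /= absz_weight_ztup.
rewrite whomogXn ?leq_pmulr ?dprod_gt0 // mulnC subnn expr0 mulr1; congr (_ + _).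
rewrite (partition_big (@idx_restr n) xpredT) //=.
apply: eq_bigr => J _; rewrite -homog_Ttail mulr_sumr.
apply: eq_big => [i|i /eqP <-]; first by rewrite -val_eqE.
by rewrite xmon_restr -scalerAr mulrA.
Qed.

Definition ellB_root n (t' : Idx n -> CC) : CC := (sylv n)%:R^-1 * t' (zidx n).

Definition Gj n (t' : Idx n -> CC) (J : Idx n) : {poly CC} :=
  t' J *: ('X - (ellB_root t')%:P) ^+ `|weight (val J)|
  + (if val J == ztup n then ('X - (ellB_root t')%:P) ^+ sylv n else 0).

Lemma GpolyE n (t' : Idx n -> CC) :
  Gpoly t' = \sum_(k < n) Xv n k ^+ sylv k
    + \sum_(J : Idx n) xmon (val J) * hz n (sylv n * `|weight (val J)|) (Gj t' J).
Proof.
rewrite /Gpoly -addrA; congr (_ + _).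
under [in RHS]eq_bigr => J _ do rewrite /Gj linearD mulrDr.
rewrite big_split sum_xmon_homog_ztup /= absz_weight_ztup; congr (_ + _).
  apply: eq_bigr => J _; rewrite linearZ /=.
  rewrite (_ : sylv n * _ = dprod n * `|weight (val J)| + `|weight (val J)|)%N.
    by rewrite whomog_XsubC_exp ?dprod_gt0 // -scalerAr mulrA.
  by rewrite sylv_dprod mulSn addnC.
have -> : (sylv n * dprod n = dprod n * sylv n + 0)%N by rewrite addn0 mulnC.
by rewrite whomog_XsubC_exp ?dprod_gt0 // expr0 mulr1.
Qed.

Definition xmnm n (j : Tup n) (k e : nat) : 'X_{1..n.+2} :=
  [multinom if @insub _ (fun x => x < n)%N 'I_n i is Some i' then (j i' : nat)
            else if i == n :> nat then k else e | i < n.+2].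

Lemma xmnm_lt n (j : Tup n) k e (i : 'I_n) : xmnm j k e (inord i) = j i.
Proof.
have iE : (inord i : 'I_n.+2) = i :> nat by rewrite inordK //; have := ltn_ord i; lia.
rewrite mnmE; case: insubP => [i' _ i'E|]; last by rewrite iE ltn_ord.
by congr (nat_of_ord (j _)); apply: val_inj; rewrite i'E iE.
Qed.

Lemma xmnm_n n (j : Tup n) k e : xmnm j k e (inord n) = k.
Proof. by rewrite mnmE inordK // insubF ?ltnn ?eqxx. Qed.

Lemma xmnm_n1 n (j : Tup n) k e : xmnm j k e (inord n.+1) = e.
Proof. by rewrite mnmE inordK // insubF ?ltnNge ?leqnSn // gtn_eqF. Qed.

Lemma xmnm_inj n (j j' : Tup n) k k' e e' :
  xmnm j k e = xmnm j' k' e' -> j = j' /\ k = k'.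
Proof.
move=> eq_mnm; split; last by rewrite -(xmnm_n j k e) eq_mnm xmnm_n.
by apply/ffunP => i; apply: val_inj; rewrite /= -(xmnm_lt j k e) eq_mnm xmnm_lt.
Qed.

Lemma xmonE n (j : Tup n) k e :
  xmon j * (Xv n n ^+ k * Xv n n.+1 ^+ e) = 'X_[xmnm j k e].
Proof.
rewrite mpolyXE_id !big_ord_recr /= mulrA; congr (_ * _ * _).
- apply: eq_bigr => i _; rewrite -(xmnm_lt j k e) (_ : widen_ord _ _ = inord i) //.
  by apply: val_inj; rewrite /= inordK //; have := ltn_ord i; lia.
- by rewrite (_ : widen_ord _ _ = inord n) ?xmnm_n //; apply: val_inj; rewrite /= inordK.
- by rewrite (_ : ord_max = inord n.+1) ?xmnm_n1 //; apply: val_inj; rewrite /= inordK.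
Qed.

Lemma mcoeff_xmon_homog n N p (j : Tup n) k : (k <= N)%N ->
  (xmon j * hz n N p)@_(xmnm j k (N - k * dprod n)) = p`_k.
Proof.
move=> k_le_N; rewrite mulr_sumr raddf_sum (bigD1 (Ordinal (k_le_N : (k < N.+1)%N))) //=.
rewrite -scalerAr xmonE mcoeffZ mcoeffX eqxx mulr1 big1 ?addr0 // => i /eqP i_neq.
rewrite -scalerAr xmonE mcoeffZ mcoeffX; case: eqP => [/xmnm_inj [_ ik]|_].
  by case: i_neq; apply: val_inj.
by rewrite mulr0.
Qed.

Lemma mcoeff_xmon_homog_neq n N p (j j' : Tup n) k e : j != j' ->
  (xmon j * hz n N p)@_(xmnm j' k e) = 0.
Proof.
move=> /negPf j_neq; rewrite mulr_sumr raddf_sum big1 // => i _.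
rewrite /= -scalerAr xmonE mcoeffZ mcoeffX; case: eqP => [/xmnm_inj [/eqP]|_].
  by rewrite j_neq.
by rewrite mulr0.
Qed.

Lemma sum_xmon_homog_eq0 n (N : Idx n -> nat) (r : Idx n -> {poly CC}) :
  (forall J, (size (r J) <= (N J).+1)%N) ->
  \sum_(J : Idx n) xmon (val J) * hz n (N J) (r J) = 0 -> forall J, r J = 0.
Proof.
move=> size_r sum0 J0; apply/polyP => k; rewrite coef0.
have [k_le|k_gt] := leqP k (N J0); last by rewrite nth_default // (leq_trans (size_r J0)).
have := congr1 (mcoeff (xmnm (val J0) k (N J0 - k * dprod n))) sum0.
rewrite raddf_sum (bigD1 J0) //= mcoeff_xmon_homog // mcoeff0 big1 ?addr0 // => J J_neq.
by rewrite mcoeff_xmon_homog_neq // val_eqE.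
Qed.

Lemma Tj_act1 n (t : Idx n.+1 -> CC) j : Tj (act 1 t) j = Tj t j.
Proof.
by rewrite !TjE; congr (_ + _); apply: eq_bigr => i _; rewrite /act expr1n mul1r.
Qed.

Lemma Tj_act n (t : Idx n.+1 -> CC) lam j : 0 < weight j ->
  Tj (act lam t) j \Po (lam ^+ dprod n *: 'X) = lam ^+ (sylv n * `|weight j|) *: Tj t j.
Proof.
move=> w_gt0; rewrite !TjE comp_polyD scalerDr; congr (_ + _).
  case: eqP => [->|_]; last by rewrite comp_poly0 scaler0.
  by rewrite rmorphXn /= comp_polyX exprZn -exprM absz_weight_ztup mulnC.
rewrite /Ttail linear_sum scaler_sumr; apply: eq_bigr => i /eqP <-.
rewrite linearZ /= rmorphXn /= comp_polyX exprZn /act !scalerA; congr (_ *: _).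
have [_ wiE] := idx_weight_restr i.
by rewrite mulrAC -exprM -exprD mulnC wiE.
Qed.

Lemma size_Gj n (t' : Idx n -> CC) J :
  (size (Gj t' J) <= (sylv n * `|weight (val J)|).+1)%N.
Proof.
rewrite (leq_trans (size_polyD _ _)) // geq_max; apply/andP; split.
  by rewrite (leq_trans (size_scale_leq _ _)) // size_exp_XsubC ltnS leq_pmull.
by case: eqP; rewrite ?size_exp_XsubC ?size_poly0 // ltnS sylv_le_homog_degree.
Qed.

Lemma dvdp_Gj n (t' : Idx n -> CC) J :
  ('X - (ellB_root t')%:P) ^+ `|weight (val J)| %| Gj t' J.
Proof.
rewrite dvdp_add //; first by rewrite -mul_polyC dvdp_mull.
case: eqP => [J0|_]; last exact: dvdp0.
by rewrite dvdp_exp2l // J0 absz_weight_ztup sylv_dprod.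
Qed.

Lemma Tj_act_Gj n (t : Idx n.+1 -> CC) (t' : Idx n -> CC) lam :
  Gpoly t' = Fpoly (act lam t) -> forall J, Tj (act lam t) (val J) = Gj t' J.
Proof.
rewrite GpolyE FpolyE => /addrI eq_sums J; apply/esym/subr0_eq; move: J.
apply: (@sum_xmon_homog_eq0 n (fun J => sylv n * `|weight (val J)|)%N).
  move=> J; rewrite (leq_trans (size_polyD _ _)) // size_polyN geq_max size_Gj.
  by rewrite (leq_trans (size_Tj_le _ _)) // ltnS sylv_le_homog_degree.
by under eq_bigr => J _ do rewrite linearB mulrBr; rewrite sumrB eq_sums subrr.
Qed.

Lemma minvalbar_eq1_of_in_boundary n (t : Idx n.+1 -> CC) :
  nonzero t -> in_boundary t -> exists c, minvalbar t c = 1.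
Proof.
move=> t_neq0 [t' [lam [_ [lam_neq0 /Tj_act_Gj TG]]]].
have lamd_neq0 k : lam ^+ k != 0 by rewrite expf_neq0.
set c := ellB_root t'; exists (c / lam ^+ dprod n).
apply/le_anti; rewrite minvalbar_le1 //=; apply: le_minvalbar => j Tj_neq0.
have w_gt0 := weight_gt0_Tj Tj_neq0.
rewrite valbar_ge1 // mup_geq //.
have := dvdp_comp_poly (lam ^+ dprod n *: 'X) (dvdp_Gj t' (exist _ j w_gt0)).
rewrite -TG /= Tj_act // rmorphXn /= comp_polyB comp_polyX comp_polyC.
have -> : lam ^+ dprod n *: 'X - c%:P = lam ^+ dprod n *: ('X - (c / lam ^+ dprod n)%:P).
  by rewrite scalerBr scale_polyC mulrCA mulfV ?mulr1.
by rewrite exprZn -exprM dvdpZl // dvdpZr.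
Qed.

Lemma in_boundary_of_minvalbar_eq1 n (t : Idx n.+1 -> CC) c :
  nonzero t -> minvalbar t c = 1 -> in_boundary t.
Proof.
move=> [i ti_neq0] min1.
have mup_ge j : Tj t j != 0 -> (`|weight j| <= mup c (Tj t j))%N.
  by move=> Tj_neq0; rewrite -valbar_ge1 ?(weight_gt0_Tj Tj_neq0) // -min1 minvalbar_le.
pose t' (J : Idx n) :=
  if val J == ztup n then (sylv n)%:R * c else lead_coef (Tj t (val J)).
have root_t' : ellB_root t' = c by rewrite /ellB_root /t' /= eqxx mulKf ?pnatr_eq0.
have TG J : Tj t (val J) = Gj t' J.
  rewrite /Gj root_t' /t'; case: eqP => [->|/eqP J_neq0]; last first.
    rewrite addr0; have [->|Tj_neq0] := eqVneq (Tj t (val J)) 0.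
      by rewrite lead_coef0 scale0r.
    by apply: dvdp_XsubC_exp_size; rewrite ?size_Tj_weight // -mup_geq // mup_ge.
  have T0_neq0 := monic_neq0 (Tj0_monic t).
  rewrite absz_weight_ztup sylv_dprod.
  apply: monic_dvdp_XsubC_exp (Tj0_monic t) _ (coef_Tj0_dprod t) _.
    by rewrite size_Tj0 sylv_dprod.
  by rewrite -mup_geq // -absz_weight_ztup mup_ge.
exists t', 1; split; last split; [|exact: oner_neq0|]; last first.
  by rewrite GpolyE FpolyE; congr (_ + _); apply: eq_bigr => J _; rewrite Tj_act1 TG.
apply/existsP; move: ti_neq0; apply: contraNT => /existsPn t'_eq0.
have {}t'_eq0 J : t' J = 0 by apply/eqP/negbNE/t'_eq0.
have c0 : c = 0 by rewrite -root_t' /ellB_root t'_eq0 mulr0.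
apply/eqP; rewrite -coef_Tj_last (TG (idx_restr i)) /Gj t'_eq0 scale0r add0r.
rewrite root_t' c0 polyC0 subr0; case: eqP => _; last by rewrite coef0.
by rewrite coefXn sylv_dprod ltn_eqF // ltnS ltnW // last_lt_dprod.
Qed.

Theorem lemma4p5 (n : nat) (hn : (1 <= n)%N) (t : Idx n.+1 -> CC)
    (ht : nonzero t) :
  (forall c : CC, minvalbar t c <= 1) /\
  ((exists c : CC, minvalbar t c = 1) <-> in_boundary t).
Proof.
split=> [c|]; first exact: minvalbar_le1.
split=> [[c]|]; first exact: in_boundary_of_minvalbar_eq1.
exact: minvalbar_eq1_of_in_boundary.
Qed.
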